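(* Let $W$ be a normal WPO-dilator and let $(\mathcal T W,\iota,\kappa)$ be a Kruskal derivative of $W$. Then $\mathcal T W$ is a normal WPO-dilator.
   Context: A quasi embedding between partial orders $X,Y$ is a function $f$ with $f(x)\leq_Y f(y)\Rightarrow x\leq_X y$; an embedding also satisfies the converse. $\mathrm{PO}$ is the category of partial orders and quasi embeddings. $[X]^{<\omega}$ denotes the finite subsets of $X$, with $[f]^{<\omega}(a)=\{f(x)\mid x\in a\}$. A PO-dilator is a functor $W:\mathrm{PO}\to\mathrm{PO}$ mapping embeddings to embeddings, with a natural transformation $\operatorname{supp}^W:W\Rightarrow[\cdot]^{<\omega}$ such that for every embedding $f:X\to Y$, $\operatorname{rng}(W(f))=\{\sigma\in W(Y)\mid\operatorname{supp}^W_Y(\sigma)\subseteq\operatorname{rng}(f)\}$. For finite $a,b\subseteq X$, $a\leq^{\mathrm{fin}}_X b$ iff every $x\in a$ has some $y\in b$ with $x\leq_X y$ ($z\leq^{\mathrm{fin}}_X b$ means $\{z\}\leq^{\mathrm{fin}}_X b$). $W$ is normal if $\sigma\leq_{W(X)}\tau$ implies $\operatorname{supp}^W_X(\sigma)\leq^{\mathrm{fin}}_X\operatorname{supp}^W_X(\tau)$. A well partial order is a partial order in which every infinite sequence $x_0,x_1,\dots$ has $i<j$ with $x_i\leq x_j$; $W$ is a WPO-dilator if $W(X)$ is a well partial order whenever $X$ is. A Kruskal fixed point of $W$ over a partial order $X$ is a partial order $Z$ with functions $\iota:X\to Z$, $\kappa:W(Z)\to Z$ such that $\operatorname{rng}(\iota)\cap\operatorname{rng}(\kappa)=\emptyset$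 and, for all $x,y\in X$, $\sigma,\tau\in W(Z)$: $\iota(x)\leq_Z\iota(y)\Rightarrow x\leq_X y$; $\iota(x)\leq_Z\kappa(\tau)$ iff $\iota(x)\leq^{\mathrm{fin}}_Z\operatorname{supp}^W_Z(\tau)$; $\kappa(\sigma)\not\leq_Z\iota(y)$; $\kappa(\sigma)\leq_Z\kappa(\tau)$ iff ($\sigma\leq_{W(Z)}\tau$ or $\kappa(\sigma)\leq^{\mathrm{fin}}_Z\operatorname{supp}^W_Z(\tau)$). It is initial if for every Kruskal fixed point $(Z',\iota',\kappa')$ of $W$ over $X$ there is a unique quasi embedding $f:Z\to Z'$ with $f\circ\iota=\iota'$ and $f\circ\kappa=\kappa'\circ W(f)$. A Kruskal derivative of a normal PO-dilator $W$ is a tuple $(\mathcal T W,\iota,\kappa)$ consisting of a normal PO-dilator $\mathcal T W$ and families of functions $\iota_X:X\to\mathcal T W(X)$, $\kappa_X:W(\mathcal T W(X))\to\mathcal T W(X)$ indexed by partial orders $X$ such that (i) $(\mathcal T W(X),\iota_X,\kappa_X)$ is an initial Kruskal fixed point of $W$ over $X$ for each $X$, and (ii) $\iota_Y\circ f=\mathcal T W(f)\circ\iota_X$ and $\mathcal T W(f)\circ\kappa_X=\kappa_Y\circ W(\mathcal T W(f))$ for every quasi embedding $f:X\to Y$. *)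

From Stdlib Require Import List Arith.
Set Implicit Arguments.

Record PO : Type := MkPO {
  carrier :> Type;
  le : carrier -> carrier -> Prop;
  le_refl : forall x, le x x;
  le_antisym : forall x y, le x y -> le y x -> x = y;
  le_trans : forall x y z, le x y -> le y z -> le x z
}.
Arguments le {p} _ _.

Record qemb (X Y : PO) : Type := MkQemb {
  qfun :> carrier X -> carrier Y;
  qfun_qe : forall x y, le (qfun x) (qfun y) -> le x y
}.

Definition is_embedding (X Y : PO) (f : qemb X Y) : Prop :=
  forall x y, le (f x) (f y) <-> le x y.

Definition qemb_id (X : PO) : qemb X X :=
  @MkQemb X X (fun x => x) (fun x y h => h).

Definition qemb_comp (X Y Z : PO) (g : qemb Y Z) (f : qemb X Y) : qemb X Z :=
  @MkQemb X Z (fun x => g (f x))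
    (fun x y h => qfun_qe f x y (qfun_qe g (f x) (f y) h)).

Definition finite_set (X : Type) (a : X -> Prop) : Prop :=
  exists l : list X, forall x, a x -> In x l.

Definition le_fin {X : PO} (a b : carrier X -> Prop) : Prop :=
  forall x, a x -> exists y, b y /\ le x y.

Record PreDilator : Type := MkPreDilator {
  dobj :> PO -> PO;
  dmap : forall X Y : PO, qemb X Y -> qemb (dobj X) (dobj Y);
  dsupp : forall X : PO, carrier (dobj X) -> carrier X -> Prop
}.
Arguments dmap p {X Y} _.
Arguments dsupp p {X} _ _.

Definition is_PO_dilator (W : PreDilator) : Prop :=
  (forall (X : PO) (s : carrier (W X)), dmap W (qemb_id X) s = s) /\
  (forall (X Y Z : PO) (f : qemb X Y) (g : qemb Y Z) (s : carrier (W X)),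
      dmap W (qemb_comp g f) s = dmap W g (dmap W f s)) /\
  (forall (X Y : PO) (f : qemb X Y), is_embedding f -> is_embedding (dmap W f)) /\
  (forall (X : PO) (s : carrier (W X)), finite_set (dsupp W s)) /\
  (* naturality of supp : W => [.]^{<omega} *)
  (forall (X Y : PO) (f : qemb X Y) (s : carrier (W X)) (y : carrier Y),
      dsupp W (dmap W f s) y <-> exists x, dsupp W s x /\ f x = y) /\
  (forall (X Y : PO) (f : qemb X Y), is_embedding f ->
     forall t : carrier (W Y),
       (exists s, dmap W f s = t) <-> (forall y, dsupp W t y -> exists x, f x = y)).

Definition is_normal (W : PreDilator) : Prop :=
  forall (X : PO) (s t : carrier (W X)), le s t -> le_fin (dsupp W s) (dsupp W t).

Definition is_WPO (X : PO) : Prop :=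
  forall s : nat -> carrier X, exists i j, i < j /\ le (s i) (s j).

Definition is_WPO_dilator (W : PreDilator) : Prop :=
  is_PO_dilator W /\ forall X : PO, is_WPO X -> is_WPO (W X).

Definition is_Kruskal_fixed_point (W : PreDilator) (X Z : PO)
    (iota : carrier X -> carrier Z) (kappa : carrier (W Z) -> carrier Z) : Prop :=
  (forall x s, iota x <> kappa s) /\
  (forall x y, le (iota x) (iota y) -> le x y) /\
  (forall x t, le (iota x) (kappa t) <-> le_fin (fun z => z = iota x) (dsupp W t)) /\
  (forall s y, ~ le (kappa s) (iota y)) /\
  (forall s t, le (kappa s) (kappa t) <->
                 (le s t \/ le_fin (fun z => z = kappa s) (dsupp W t))).

Definition is_initial_Kruskal_fixed_point (W : PreDilator) (X Z : PO)
    (iota : carrier X -> carrier Z) (kappa : carrier (W Z) -> carrier Z) : Prop :=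
  is_Kruskal_fixed_point W X Z iota kappa /\
  forall (Z' : PO) (iota' : carrier X -> carrier Z')
         (kappa' : carrier (W Z') -> carrier Z'),
    is_Kruskal_fixed_point W X Z' iota' kappa' ->
    exists f : qemb Z Z',
      ((forall x, f (iota x) = iota' x) /\
       (forall s, f (kappa s) = kappa' (dmap W f s))) /\
      (forall g : qemb Z Z',
         (forall x, g (iota x) = iota' x) ->
         (forall s, g (kappa s) = kappa' (dmap W g s)) ->
         forall z, g z = f z).

Definition is_Kruskal_derivative (W TW : PreDilator)
    (iota : forall X : PO, carrier X -> carrier (TW X))
    (kappa : forall X : PO, carrier (W (TW X)) -> carrier (TW X)) : Prop :=
  is_PO_dilator TW /\ is_normal TW /\
  (forall X : PO, is_initial_Kruskal_fixed_point W X (TW X) (iota X) (kappa X)) /\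
  (forall (X Y : PO) (f : qemb X Y) (x : carrier X),
      iota Y (f x) = dmap TW f (iota X x)) /\
  (forall (X Y : PO) (f : qemb X Y) (s : carrier (W (TW X))),
      dmap TW f (kappa X s) = kappa Y (dmap W (dmap TW f) s)).

(* Iterating T_(n+1) = X + W(T_n) along embeddings T_n -> T_(n+1) (normality
   of W is what makes each T_(n+1) a partial order) and taking the directed
   colimit yields a Kruskal fixed point Z of W over X in which iota is an
   embedding.  Every element of Z is iota x, or kappa s where the support of s
   consists of elements appearing at an earlier stage.  A minimal bad sequence
   argument in the style of Nash-Williams therefore shows that Z is a WPO
   whenever X is and W preserves WPOs.  Initiality of TW(X) gives a quasi
   embedding TW(X) -> Z, and quasi embeddings reflect WPOs.  The remaining
   properties of TW are part of the definition of a Kruskal derivative. *)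

From Stdlib Require Import List Arith Lia Wf_nat.
From Stdlib Require Import Classical ClassicalEpsilon FunctionalExtensionality ProofIrrelevance.
From Stdlib Require Import Eqdep_dec.

Lemma qemb_inj (A B : PO) (f : qemb A B) a b : f a = f b -> a = b.
Proof. intro E; apply le_antisym; apply (qfun_qe f); rewrite E; apply le_refl. Qed.

Lemma qemb_ext (A B : PO) (f g : qemb A B) : (forall x, f x = g x) -> f = g.
Proof.
  destruct f as [f Hf], g as [g Hg]; simpl; intro E.
  assert (f = g) as <- by (apply functional_extensionality; exact E).
  f_equal; apply proof_irrelevance.
Qed.

Lemma WPO_qemb {A B : PO} (f : qemb A B) : is_WPO B -> is_WPO A.
Proof.
  intros HB s. destruct (HB (fun i => f (s i))) as (i & j & Hij & Hle).
  exists i, j; split; [exact Hij | exact (qfun_qe f _ _ Hle)].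
Qed.

Section SubPO.
Variables (Z : PO) (P : carrier Z -> Prop).

Definition sub_le (a b : {z | P z}) : Prop := le (proj1_sig a) (proj1_sig b).

Lemma sub_le_antisym a b : sub_le a b -> sub_le b a -> a = b.
Proof.
  destruct a as [a Ha], b as [b Hb]; unfold sub_le; simpl; intros Hab Hba.
  assert (a = b) as <- by (apply le_antisym; assumption).
  f_equal; apply proof_irrelevance.
Qed.

Definition subPO : PO :=
  MkPO sub_le (fun a => le_refl Z _) sub_le_antisym (fun a b c => le_trans Z _ _ _).

Definition sub_incl : qemb subPO Z := MkQemb subPO Z (@proj1_sig _ _) (fun a b h => h).

Lemma sub_incl_emb : is_embedding sub_incl.
Proof. intros a b; reflexivity. Qed.
End SubPO.
Arguments subPO {Z} P.
Arguments sub_incl {Z} P.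
Arguments sub_incl_emb {Z} P.

Lemma least_nat (P : nat -> Prop) :
  (exists n, P n) -> exists n, P n /\ forall m, P m -> n <= m.
Proof.
  intro H.
  destruct (dec_inh_nat_subset_has_unique_least_element P (fun n => classic (P n)) H)
    as (n & Hn & _).
  exists n; exact Hn.
Qed.

Lemma increasing_lt (sel : nat -> nat) :
  (forall p, sel p < sel (S p)) -> forall p q, p < q -> sel p < sel q.
Proof.
  intros Hsel p q Hpq. induction Hpq as [|q _ IH]; [apply Hsel|].
  specialize (Hsel q); lia.
Qed.

Lemma chain_selection (Q : nat -> nat -> Prop) a0 :
  (forall a, exists b, a < b /\ Q a b) ->
  exists sel : nat -> nat, sel 0 = a0 /\ forall p, sel p < sel (S p) /\ Q (sel p) (sel (S p)).
Proof.
  intro H. destruct (choice _ H) as [next Hnext].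
  exists (fix sel p := match p with 0 => a0 | S p => next (sel p) end).
  split; [reflexivity | intro p; apply Hnext].
Qed.

Lemma pigeonhole_seq {A : Type} (L : list A) (u : nat -> A) :
  (forall l, In (u l) L) -> exists i j, i < j /\ u i = u j.
Proof.
  revert u; induction L as [|a L IH]; intros u Hu; [destruct (Hu 0)|].
  destruct (classic (exists i j, i < j /\ u i = a /\ u j = a)) as [(i & j & Hij & Hi & Hj)|Hno].
  - exists i, j; split; congruence.
  - destruct (classic (exists i, u i = a)) as [[i Hi]|Hnone].
    + destruct (IH (fun l => u (S i + l))) as (p & q & Hpq & E).
      { intro l. destruct (Hu (S i + l)) as [E|E]; [|exact E].
        exfalso; apply Hno; exists i, (S i + l); repeat split; auto; lia. }
      exists (S i + p), (S i + q); split; [lia | exact E].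
    + apply IH. intro l. destruct (Hu l) as [E|E]; [exfalso; eauto | exact E].
Qed.

(** * Minimal bad sequences *)

Definition bad {A : Type} (R : A -> A -> Prop) (f : nat -> A) : Prop :=
  forall i j, i < j -> ~ R (f i) (f j).

Lemma WPO_no_bad (X : PO) : (forall f, ~ bad (@le X) f) -> is_WPO X.
Proof.
  intros H f. apply NNPP; intro Hn. apply (H f).
  intros i j Hij Hle; apply Hn; eauto.
Qed.

Section MinimalBad.
Variables (A : Type) (R : A -> A -> Prop) (h : A -> nat).

Definition agree_below (f g : nat -> A) n := forall i, i < n -> g i = f i.

Definition minimal_bad (m : nat -> A) : Prop :=
  bad R m /\ forall n g, agree_below m g n -> h (g n) < h (m n) -> ~ bad R g.

Definition least_extension (f : nat -> A) n (g : nat -> A) : Prop :=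
  bad R g /\ agree_below f g n /\
  forall g', bad R g' -> agree_below f g' n -> h (g n) <= h (g' n).

Lemma least_extension_ex f n : bad R f -> exists g, least_extension f n g.
Proof.
  intro Hf.
  destruct (least_nat (fun k => exists g, (bad R g /\ agree_below f g n) /\ h (g n) = k))
    as (k & (g & [Hg Hgf] & <-) & Hmin).
  { exists (h (f n)), f; split; [split; [exact Hf | intros i _; reflexivity] | reflexivity]. }
  exists g; repeat split; [exact Hg | exact Hgf |].
  intros g' Hg' Hg'f. apply Hmin; eauto.
Qed.

Variables (f0 : nat -> A) (f0_bad : bad R f0).

Fixpoint approx (n : nat) : nat -> A :=
  let prev := match n with 0 => f0 | S k => approx k end in
  epsilon (inhabits f0) (least_extension prev n).

Lemma approx_spec n :
  least_extension (match n with 0 => f0 | S k => approx k end) n (approx n).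
Proof.
  induction n as [|n IH]; simpl; apply epsilon_spec, least_extension_ex;
    [exact f0_bad | apply IH].
Qed.

Definition limit_seq n := approx n n.

Lemma approx_stable d n i : i <= n -> approx (d + n) i = approx n i.
Proof.
  intro Hi. induction d as [|d IH]; [reflexivity|].
  destruct (approx_spec (S d + n)) as (_ & Hagree & _).
  simpl plus in *. rewrite Hagree by lia. exact IH.
Qed.

Lemma approx_limit n i : i <= n -> approx n i = limit_seq i.
Proof.
  intro Hi. replace n with ((n - i) + i) by lia. apply approx_stable; lia.
Qed.

Lemma limit_seq_minimal_bad : minimal_bad limit_seq.
Proof.
  split.
  - intros i j Hij. rewrite <- (approx_limit j i (Nat.lt_le_incl _ _ Hij)).
    apply (approx_spec j); exact Hij.
  - intros n g Hg Hh Hbad. destruct (approx_spec n) as (_ & _ & Hleast).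
    enough (h (approx n n) <= h (g n)) by (unfold limit_seq in Hh; lia).
    apply Hleast; [exact Hbad|]. intros i Hi. rewrite Hg by exact Hi.
    destruct n as [|n]; [lia|]. symmetry; apply approx_limit; lia.
Qed.
End MinimalBad.
Arguments minimal_bad {A} R h m.
Arguments agree_below {A} f g n.

Lemma minimal_bad_ex {A : Type} (R : A -> A -> Prop) (h : A -> nat) :
  (exists f, bad R f) -> exists m, minimal_bad R h m.
Proof. intros [f Hf]. exists (limit_seq A R h f). apply limit_seq_minimal_bad, Hf. Qed.

Section DilatorFacts.
Context {W : PreDilator} (HW : is_PO_dilator W).

Lemma dmap_comp {A B C : PO} (f : qemb A B) (g : qemb B C) s :
  dmap W (qemb_comp g f) s = dmap W g (dmap W f s).
Proof. apply HW. Qed.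

Lemma dmap_emb {A B : PO} {f : qemb A B} : is_embedding f -> is_embedding (dmap W f).
Proof. apply HW. Qed.

Lemma dsupp_finite {A : PO} (s : carrier (W A)) : finite_set (dsupp W s).
Proof. apply HW. Qed.

Lemma dsupp_dmap {A B : PO} (f : qemb A B) s b :
  dsupp W (dmap W f s) b <-> exists a, dsupp W s a /\ f a = b.
Proof. apply HW. Qed.

Lemma dmap_onto_supp {A B : PO} {f : qemb A B} : is_embedding f ->
  forall t, (forall b, dsupp W t b -> exists a, f a = b) -> exists s, dmap W f s = t.
Proof. intros Hf t; apply HW, Hf. Qed.
End DilatorFacts.

Lemma finite_set_bounded_union {A : Type} (P : nat -> A -> Prop) K :
  (forall k, finite_set (P k)) -> finite_set (fun a => exists k, k < K /\ P k a).
Proof.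
  intro HP. induction K as [|K [L HL]]; [exists nil; intros a (k & Hk & _); lia|].
  destruct (HP K) as [LK HLK]. exists (L ++ LK). intros a (k & Hk & Ha).
  apply in_or_app. destruct (Nat.eq_dec k K) as [->|Hne]; [right; auto | left].
  apply HL; exists k; split; [lia | exact Ha].
Qed.

(** * Well partial orders generated by iota and kappa *)

Section GeneratedWPO.
Context {W : PreDilator} (HW : is_PO_dilator W).
Hypothesis W_WPO : forall X, is_WPO X -> is_WPO (W X).
Variables (X Z : PO) (HX : is_WPO X).
Variables (iota : carrier X -> carrier Z) (kappa : carrier (W Z) -> carrier Z).
Variable h : carrier Z -> nat.
Hypothesis iota_mono : forall x y, le x y -> le (iota x) (iota y).
Hypothesis kappa_mono : forall s t, le s t -> le (kappa s) (kappa t).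
Hypothesis supp_le_kappa : forall s u, dsupp W s u -> le u (kappa s).
Hypothesis iota_or_kappa : forall z, (exists x, z = iota x) \/
  (exists s, z = kappa s /\ forall u, dsupp W s u -> h u < h z).

Lemma bad_iota_finitely_often (m : nat -> carrier Z) :
  bad le m -> exists N, forall i, N <= i -> forall x, m i <> iota x.
Proof.
  intro Hm. apply NNPP; intro Hinf.
  assert (Hio : forall a, exists b, a < b /\ exists x, m b = iota x).
  { intro a. apply NNPP; intro Hno. apply Hinf; exists (S a); intros i Hi x E.
    apply Hno; exists i; split; [lia | eauto]. }
  destruct (Hio 0) as (b0 & _ & Hb0).
  destruct (chain_selection (fun _ b => exists x, m b = iota x) b0 Hio) as (sel & Hsel0 & Hsel).
  assert (Hx : forall p, exists x, m (sel p) = iota x).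
  { intros [|p]; [rewrite Hsel0; exact Hb0 | apply Hsel]. }
  destruct (choice _ Hx) as [xs Hxs].
  destruct (HX xs) as (p & q & Hpq & Hle).
  apply (Hm (sel p) (sel q)); [apply increasing_lt; [apply Hsel | exact Hpq]|].
  rewrite !Hxs; apply iota_mono, Hle.
Qed.

Section KappaTail.
Variables (m : nat -> carrier Z) (m_min : minimal_bad le h m).
Variables (N : nat) (sg : nat -> carrier (W Z)).
Hypothesis m_tail : forall k, m (k + N) = kappa (sg k).
Hypothesis sg_height : forall k u, dsupp W (sg k) u -> h u < h (m (k + N)).

Section SupportSeq.
Variables (u : nat -> carrier Z) (kk : nat -> nat).
Hypothesis u_supp : forall l, dsupp W (sg (kk l)) (u l).
Hypothesis u_bad : bad le u.

Lemma support_index_unbounded K L : exists l, L <= l /\ K <= kk l.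
Proof.
  apply NNPP; intro Hno.
  destruct (finite_set_bounded_union (fun k => dsupp W (sg k)) K
              (fun k => dsupp_finite HW (sg k))) as [lst Hlst].
  destruct (pigeonhole_seq lst (fun l => u (L + l))) as (i & j & Hij & E).
  { intro l. apply Hlst. exists (kk (L + l)); split; [|apply u_supp].
    apply NNPP; intro HK; apply Hno; exists (L + l); split; lia. }
  apply (u_bad (L + i) (L + j)); [lia|]. rewrite E; apply le_refl.
Qed.

Variable sel : nat -> nat.
Hypothesis sel_incr : forall p, sel p < sel (S p) /\ kk (sel p) < kk (sel (S p)).

(* The initial part of m followed by support elements: a bad sequence that
   undercuts m at position n0, against minimality. *)
Let n0 := kk (sel 0) + N.
Let spliced i := if i <? n0 then m i else u (sel (i - n0)).

Lemma spliced_bad : bad le spliced.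
Proof.
  assert (Hkk : forall q, kk (sel 0) <= kk (sel q)).
  { intros [|q]; [lia|]. pose proof (increasing_lt (fun p => kk (sel p))
      (fun p => proj2 (sel_incr p)) 0 (S q)); lia. }
  intros i j Hij Hle; unfold spliced in Hle.
  destruct (Nat.ltb_spec i n0), (Nat.ltb_spec j n0); [| | lia |].
  - exact (proj1 m_min i j Hij Hle).
  - apply (proj1 m_min i (kk (sel (j - n0)) + N)).
    { pose proof (Hkk (j - n0)); unfold n0 in *; lia. }
    apply le_trans with (1 := Hle). rewrite m_tail. apply supp_le_kappa, u_supp.
  - apply (u_bad (sel (i - n0)) (sel (j - n0))); [|exact Hle].
    apply increasing_lt; [intro p; apply sel_incr | lia].
Qed.

Lemma spliced_smaller : h (spliced n0) < h (m n0).
Proof.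
  unfold spliced. rewrite Nat.ltb_irrefl, Nat.sub_diag. apply sg_height, u_supp.
Qed.

Lemma spliced_agree : agree_below m spliced n0.
Proof. intros i Hi. unfold spliced. destruct (Nat.ltb_spec i n0); [reflexivity | lia]. Qed.
End SupportSeq.

Lemma supports_WPO : is_WPO (subPO (fun z => exists k, dsupp W (sg k) z)).
Proof.
  apply WPO_no_bad; intros v Hv.
  destruct (choice _ (fun l => proj2_sig (v l))) as [kk Hkk].
  set (u := fun l => proj1_sig (v l)) in Hkk.
  assert (Hu : bad le u) by exact Hv.
  destruct (chain_selection (fun a b => kk a < kk b) 0) as (sel & _ & Hsel).
  { intro a. destruct (support_index_unbounded u kk Hkk Hu (S (kk a)) (S a)) as (l & ? & ?).
    exists l; split; lia. }
  exact (proj2 m_min _ _ (spliced_agree u kk sel) (spliced_smaller u kk Hkk sel)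
           (spliced_bad u kk Hkk Hu sel Hsel)).
Qed.

Lemma kappa_tail_not_bad : False.
Proof.
  set (U := fun z => exists k, dsupp W (sg k) z).
  assert (Hlift : forall k, exists t, dmap W (sub_incl U) t = sg k).
  { intro k. apply (dmap_onto_supp HW (sub_incl_emb U)). intros z Hz.
    exists (exist U z (ex_intro _ k Hz)); reflexivity. }
  destruct (choice _ Hlift) as [tau Htau].
  destruct (W_WPO _ supports_WPO tau) as (a & b & Hab & Hle).
  apply (proj1 m_min (a + N) (b + N)); [lia|].
  rewrite !m_tail, <- !Htau. apply kappa_mono, (dmap_emb HW (sub_incl_emb U)), Hle.
Qed.
End KappaTail.

Theorem generated_WPO : is_WPO Z.
Proof.
  apply WPO_no_bad; intros s Hs.
  destruct (minimal_bad_ex le h (ex_intro _ s Hs)) as [m Hm].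
  destruct (bad_iota_finitely_often m (proj1 Hm)) as [N HN].
  assert (Hk : forall k, exists s, m (k + N) = kappa s /\
                  forall u, dsupp W s u -> h u < h (m (k + N))).
  { intro k. destruct (iota_or_kappa (m (k + N))) as [[x Hx] | Hs']; [|exact Hs'].
    exfalso; apply (HN (k + N) ltac:(lia) x Hx). }
  destruct (choice _ Hk) as [sg Hsg].
  exact (kappa_tail_not_bad m Hm N sg (fun k => proj1 (Hsg k)) (fun k => proj2 (Hsg k))).
Qed.
End GeneratedWPO.

(** * The stages T_(n+1) = X + W(T_n) *)

Section Stages.
Context {W : PreDilator} (HW : is_PO_dilator W) (HN : is_normal W) (X : PO).

Definition layer (P : PO) : Type := (carrier X + carrier (W P))%type.

(* A stage consists of T_n, the order of T_(n+1) = X + W(T_n) and the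
   embedding T_n -> T_(n+1); besides the clauses of a Kruskal fixed point it
   records the invariants that let the next stage be built. *)
Record stage := {
  st_lower : PO;
  st_le : layer st_lower -> layer st_lower -> Prop;
  st_refl : forall a, st_le a a;
  st_antisym : forall a b, st_le a b -> st_le b a -> a = b;
  st_trans : forall a b c, st_le a b -> st_le b c -> st_le a c;
  st_emb : carrier st_lower -> layer st_lower;
  st_emb_le : forall a b, st_le (st_emb a) (st_emb b) <-> le a b;
  st_inl_inl : forall x y, st_le (inl x) (inl y) <-> le x y;
  st_inl_inr : forall x t,
    st_le (inl x) (inr t) <-> exists z, dsupp W t z /\ st_le (inl x) (st_emb z);
  st_inr_inl : forall s y, ~ st_le (inr s) (inl y);
  st_inr_inr : forall s t,
    st_le (inr s) (inr t) <-> le s t \/ exists z, dsupp W t z /\ st_le (inr s) (st_emb z);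
  st_below_emb : forall a b, st_le a (st_emb b) -> exists c, a = st_emb c;
  st_supp_not_above : forall t z, dsupp W t z -> ~ st_le (inr t) (st_emb z);
  st_supp_below : forall t z, dsupp W t z -> st_le (st_emb z) (inr t)
}.

Definition st_upper (S : stage) : PO :=
  MkPO (st_le S) (st_refl S) (st_antisym S) (st_trans S).

Definition st_qemb (S : stage) : qemb (st_lower S) (st_upper S) :=
  MkQemb (st_lower S) (st_upper S) (st_emb S) (fun a b h => proj1 (st_emb_le S a b) h).

Lemma st_qemb_emb (S : stage) : is_embedding (st_qemb S).
Proof. intros a b; apply st_emb_le. Qed.

Section Step.
Variable S : stage.

Let e := st_qemb S.
Let We := dmap W e.

Lemma We_emb : is_embedding We.
Proof. apply (dmap_emb HW), st_qemb_emb. Qed.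

Lemma le_We_range s t : le s (We t) -> exists s', We s' = s.
Proof.
  intro H. apply (dmap_onto_supp HW (st_qemb_emb S)). intros y Hy.
  destruct (HN _ _ _ H y Hy) as (y' & Hy' & Hle).
  apply (dsupp_dmap HW) in Hy' as (c & _ & <-).
  destruct (st_below_emb S _ _ Hle) as [c' ->]. exists c'; reflexivity.
Qed.

(* The last clause is [inr s <= step_emb z] computed one stage down, where
   only the [s] coming from [W(T_n)] can lie below [T_(n+1)]. *)
Definition step_le (a b : layer (st_upper S)) : Prop :=
  match a, b with
  | inl x, inl y => le x y
  | inl x, inr t => exists z, dsupp W t z /\ st_le S (inl x) z
  | inr _, inl _ => False
  | inr s, inr t => le s t \/
      exists z, dsupp W t z /\ exists s', We s' = s /\ st_le S (inr s') z
  end.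

Definition step_emb (a : carrier (st_upper S)) : layer (st_upper S) :=
  match a with inl x => inl x | inr s => inr (We s) end.

Lemma step_refl a : step_le a a.
Proof. destruct a; simpl; [apply le_refl | left; apply le_refl]. Qed.

Lemma step_trans a b c : step_le a b -> step_le b c -> step_le a c.
Proof.
  destruct a as [x|s], b as [y|t], c as [w|u]; simpl; try tauto.
  - apply le_trans.
  - intros Hxy (z & Hz & Hyz). exists z; split; [exact Hz|].
    apply (st_trans S) with (2 := Hyz), (st_inl_inl S), Hxy.
  - intros (z & Hz & Hxz) [Htu | (z2 & Hz2 & t' & <- & Ht'z2)].
    + destruct (HN _ _ _ Htu z Hz) as (z2 & Hz2 & Hzz2).
      exists z2; split; [exact Hz2 | apply (st_trans S) with (1 := Hxz), Hzz2].
    + apply (dsupp_dmap HW) in Hz as (z' & Hz' & <-).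
      exists z2; split; [exact Hz2|]. apply (st_trans S) with (2 := Ht'z2), (st_inl_inr S).
      exists z'; split; assumption.
  - intros [Hst | (z & Hz & s' & Hs' & Hs'z)] [Htu | (z2 & Hz2 & t' & <- & Ht'z2)].
    + left; apply le_trans with t; assumption.
    + right. destruct (le_We_range _ _ Hst) as (s' & <-).
      exists z2; split; [exact Hz2|]. exists s'; split; [reflexivity|].
      apply (st_trans S) with (2 := Ht'z2), (st_inr_inr S). left; apply We_emb, Hst.
    + right. destruct (HN _ _ _ Htu z Hz) as (z2 & Hz2 & Hzz2).
      exists z2; split; [exact Hz2|]. exists s'; split; [exact Hs'|].
      apply (st_trans S) with (1 := Hs'z), Hzz2.
    + right. apply (dsupp_dmap HW) in Hz as (z' & Hz' & <-).
      exists z2; split; [exact Hz2|]. exists s'; split; [exact Hs'|].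
      apply (st_trans S) with (2 := Ht'z2), (st_inr_inr S). right; exists z'; split; assumption.
Qed.

Lemma step_emb_le a b : step_le (step_emb a) (step_emb b) <-> st_le S a b.
Proof.
  destruct a as [x|s], b as [y|t]; simpl.
  - symmetry; apply (st_inl_inl S).
  - rewrite (st_inl_inr S). split; intros (z & Hz & H).
    + apply (dsupp_dmap HW) in Hz as (z' & Hz' & <-). exists z'; split; assumption.
    + exists (st_emb S z); split; [apply (dsupp_dmap HW); exists z; split; auto | exact H].
  - split; [tauto | apply (st_inr_inl S)].
  - rewrite (st_inr_inr S), (We_emb s t).
    split; intros [H | (z & Hz & H)]; [left; exact H | | left; exact H |].
    + destruct H as (s' & Hs' & H). apply qemb_inj in Hs' as ->.
      apply (dsupp_dmap HW) in Hz as (z' & Hz' & <-). right; exists z'; split; assumption.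
    + right. exists (st_emb S z); split; [apply (dsupp_dmap HW); exists z; split; auto|].
      exists s; split; [reflexivity | exact H].
Qed.

Lemma step_supp_not_above t z : dsupp W t z -> ~ step_le (inr t) (step_emb z).
Proof.
  intros Hz. destruct z as [y|u]; simpl; [tauto|].
  intros [H | (z2 & Hz2 & t' & <- & H)].
  - destruct (HN _ _ _ H _ Hz) as (v & Hv & Hle).
    apply (dsupp_dmap HW) in Hv as (w & Hw & <-). exact (st_supp_not_above S u w Hw Hle).
  - apply (dsupp_dmap HW) in Hz2 as (w & Hw & <-).
    apply (dsupp_dmap HW) in Hz as (z' & Hz' & Hz'e).
    apply (st_supp_not_above S t' z' Hz'), (st_trans S) with (1 := H).
    simpl in Hz'e; rewrite Hz'e. apply (st_supp_below S), Hw.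
Qed.

Lemma step_inr_below_emb (s t : carrier (W (st_upper S))) :
  (exists z, dsupp W t z /\ exists s', We s' = s /\ st_le S (inr s') z) ->
  exists z, dsupp W t z /\ step_le (inr s) (step_emb z).
Proof.
  intros (z & Hz & s' & <- & H). exists z; split; [exact Hz|].
  apply (step_emb_le (inr s') z), H.
Qed.

Lemma step_antisym a b : step_le a b -> step_le b a -> a = b.
Proof.
  intros Hab Hba.
  destruct a as [x|s], b as [y|t]; try contradiction.
  - f_equal; apply le_antisym; assumption.
  - destruct Hab as [Hab|Hab].
    + destruct Hba as [Hba|Hba]; [f_equal; apply le_antisym; assumption|].
      exfalso. destruct (step_inr_below_emb _ _ Hba) as (z & Hz & H).
      apply (step_supp_not_above _ _ Hz), step_trans with (2 := H). left; exact Hab.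
    + exfalso. destruct (step_inr_below_emb _ _ Hab) as (z & Hz & H).
      apply (step_supp_not_above _ _ Hz), step_trans with (1 := Hba), H.
Qed.

Lemma step_below_emb a b : step_le a (step_emb b) -> exists c, a = step_emb c.
Proof.
  destruct a as [x|s]; [intros _; exists (inl x); reflexivity|].
  destruct b as [y|t]; simpl; [contradiction|].
  intros [H | (z & _ & s' & <- & _)].
  - destruct (le_We_range _ _ H) as (s' & <-). exists (inr s'); reflexivity.
  - exists (inr s'); reflexivity.
Qed.

Lemma step_inl_inl x y : step_le (inl x) (inl y) <-> le x y.
Proof. reflexivity. Qed.

Lemma step_inl_inr x t :
  step_le (inl x) (inr t) <-> exists z, dsupp W t z /\ step_le (inl x) (step_emb z).
Proof.
  simpl. split; intros (z & Hz & H); exists z; split; try exact Hz.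
  - apply (step_emb_le (inl x) z), H.
  - apply (step_emb_le (inl x) z), H.
Qed.

Lemma step_inr_inl s y : ~ step_le (inr s) (inl y).
Proof. simpl; tauto. Qed.

Lemma step_inr_inr s t :
  step_le (inr s) (inr t) <-> le s t \/ exists z, dsupp W t z /\ step_le (inr s) (step_emb z).
Proof.
  split.
  - intros [H|H]; [left; exact H | right; apply step_inr_below_emb, H].
  - intros [H | (z & Hz & H)]; [left; exact H|]. right.
    destruct (step_below_emb _ _ H) as ([x|s'] & E); [discriminate|].
    injection E as ->. exists z; split; [exact Hz|]. exists s'; split; [reflexivity|].
    apply (step_emb_le (inr s') z), H.
Qed.

Lemma step_supp_below t z : dsupp W t z -> step_le (step_emb z) (inr t).
Proof.
  intro Hz. destruct z as [x|v]; simpl.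
  - exists (inl x); split; [exact Hz | apply (st_refl S)].
  - right; exists (inr v); split; [exact Hz|]. exists v; split; [reflexivity | apply (st_refl S)].
Qed.

Definition step : stage :=
  Build_stage (st_upper S) step_le step_refl step_antisym step_trans step_emb step_emb_le
    step_inl_inl step_inl_inr step_inr_inl step_inr_inr step_below_emb step_supp_not_above
    step_supp_below.
End Step.

Definition emptyPO : PO :=
  MkPO (fun _ _ : Empty_set => False) (fun x => match x with end)
    (fun x _ _ _ => match x with end) (fun x _ _ _ _ => match x with end).

Definition base_le (a b : layer emptyPO) : Prop :=
  match a, b with
  | inl x, inl y => le x y
  | inr s, inr t => le s t
  | _, _ => False
  end.

Lemma base_refl a : base_le a a.
Proof. destruct a; apply le_refl. Qed.

Lemma base_antisym a b : base_le a b -> base_le b a -> a = b.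
Proof. destruct a, b; simpl; try tauto; intros; f_equal; apply le_antisym; assumption. Qed.

Lemma base_trans a b c : base_le a b -> base_le b c -> base_le a c.
Proof. destruct a, b, c; simpl; try tauto; apply le_trans. Qed.

Definition base : stage.
Proof.
  refine (Build_stage emptyPO base_le base_refl base_antisym base_trans
            (fun e => match e with end) _ _ _ _ _ _ _ _).
  - intros [].
  - reflexivity.
  - intros x t; split; [intros [] | intros ([] & _)].
  - intros s y H; exact H.
  - intros s t; split; [intros H; left; exact H | intros [H | ([] & _)]; exact H].
  - intros a [].
  - intros t [].
  - intros t [].
Defined.

Fixpoint stage_at (n : nat) : stage :=
  match n with 0 => base | S n => step (stage_at n) end.

End Stages.
Arguments st_lower {W X}.
Arguments st_le {W X}.
Arguments st_emb {W X}.
Arguments st_inl_inr {W X}.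
Arguments st_inr_inl {W X}.
Arguments st_inr_inr {W X}.
Arguments st_supp_below {W X}.
Arguments st_qemb {W X}.
Arguments st_qemb_emb {W X}.

(** * Colimits of chains of embeddings *)

Section ChainColimit.
Variables (T : nat -> PO) (e : forall n, qemb (T n) (T (S n))).
Hypothesis e_emb : forall n, is_embedding (e n).

(* An element of the colimit is the family of its representatives at all
   levels, undefined below the level where it first appears; the second clause
   makes this family unique. *)
Definition thread (f : forall k, option (carrier (T k))) : Prop :=
  (forall k a, f k = Some a -> f (S k) = Some (e k a)) /\
  (forall k c, f (S k) = Some (e k c) -> f k = Some c) /\
  (exists k a, f k = Some a).

Lemma thread_up f k m a : thread f -> f k = Some a -> k <= m -> exists b, f m = Some b.
Proof.
  intros Hf Ha Hkm. induction Hkm as [|m _ [b Hb]]; [exists a; exact Ha|].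
  exists (e m b). apply (proj1 Hf), Hb.
Qed.

Lemma thread_le_shift f g k a b : thread f -> thread g -> f k = Some a -> g k = Some b ->
  forall d a' b', f (d + k) = Some a' -> g (d + k) = Some b' -> (le a' b' <-> le a b).
Proof.
  intros Hf Hg Ha Hb d. induction d as [|d IH]; intros a' b' Ha' Hb'.
  - simpl in *. rewrite Ha in Ha'; rewrite Hb in Hb'.
    injection Ha' as <-; injection Hb' as <-; reflexivity.
  - destruct (thread_up f k (d + k) a Hf Ha) as [a1 Ha1]; [lia|].
    destruct (thread_up g k (d + k) b Hg Hb) as [b1 Hb1]; [lia|].
    rewrite <- (IH a1 b1 Ha1 Hb1).
    simpl in Ha', Hb'. rewrite (proj1 Hf _ _ Ha1) in Ha'. rewrite (proj1 Hg _ _ Hb1) in Hb'.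
    injection Ha' as <-; injection Hb' as <-. apply e_emb.
Qed.

Lemma thread_le_any_level f g k m a b a' b' : thread f -> thread g ->
  f k = Some a -> g k = Some b -> f m = Some a' -> g m = Some b' -> (le a b <-> le a' b').
Proof.
  intros Hf Hg Ha Hb Ha' Hb'. destruct (le_ge_dec k m) as [H|H].
  - destruct (Nat.le_exists_sub k m H) as (d & -> & _). symmetry.
    exact (thread_le_shift f g k a b Hf Hg Ha Hb _ a' b' Ha' Hb').
  - destruct (Nat.le_exists_sub m k H) as (d & -> & _).
    exact (thread_le_shift f g m a' b' Hf Hg Ha' Hb' _ a b Ha Hb).
Qed.

Lemma thread_ext f g k a : thread f -> thread g -> f k = Some a -> g k = Some a -> f = g.
Proof.
  intros Hf Hg Ha Hb. apply functional_extensionality_dep.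
  assert (Hup : forall d, f (d + k) = g (d + k)).
  { induction d as [|d IH]; [simpl; congruence|].
    destruct (thread_up f k (d + k) a Hf Ha) as [c Hc]; [lia|].
    simpl. rewrite (proj1 Hf _ _ Hc). rewrite IH in Hc. rewrite (proj1 Hg _ _ Hc).
    reflexivity. }
  assert (Hdown : forall d m, m + d = k -> f m = g m).
  { induction d as [|d IH]; intros m Hm.
    - replace m with (0 + k) by lia. apply Hup.
    - specialize (IH (S m) ltac:(lia)).
      destruct (f m) as [c|] eqn:Ef.
      + pose proof (proj1 Hf _ _ Ef) as E. rewrite IH in E.
        symmetry. apply (proj1 (proj2 Hg)), E.
      + destruct (g m) as [c|] eqn:Eg; [|reflexivity].
        pose proof (proj1 Hg _ _ Eg) as E. rewrite <- IH in E.
        rewrite (proj1 (proj2 Hf) _ _ E) in Ef. discriminate. }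
  intro m. destruct (le_ge_dec k m) as [H|H].
  - replace m with ((m - k) + k) by lia. apply Hup.
  - apply (Hdown (k - m)). lia.
Qed.

Definition colim_el := {f : forall k, option (carrier (T k)) | thread f}.

Definition colim_le (F G : colim_el) : Prop :=
  exists k a b, proj1_sig F k = Some a /\ proj1_sig G k = Some b /\ le a b.

Lemma colim_le_at (F G : colim_el) k a b :
  proj1_sig F k = Some a -> proj1_sig G k = Some b -> (colim_le F G <-> le a b).
Proof.
  intros Ha Hb. split.
  - intros (k' & a' & b' & Ha' & Hb' & H).
    apply (thread_le_any_level _ _ k' k a' b' a b (proj2_sig F) (proj2_sig G)); assumption.
  - intro H; exists k, a, b; auto.
Qed.

Lemma colim_el_up (F : colim_el) k m a :
  proj1_sig F k = Some a -> k <= m -> exists b, proj1_sig F m = Some b.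
Proof. intros; eapply thread_up; eauto; apply (proj2_sig F). Qed.

Lemma colim_el_above (F : colim_el) m0 : exists m a, m0 <= m /\ proj1_sig F m = Some a.
Proof.
  destruct (proj2 (proj2 (proj2_sig F))) as (k & a & Ha).
  destruct (colim_el_up F k (m0 + k) a Ha) as [b Hb]; [lia|].
  exists (m0 + k), b; split; [lia | exact Hb].
Qed.

Lemma colim_el_common (F G : colim_el) :
  exists m a b, proj1_sig F m = Some a /\ proj1_sig G m = Some b.
Proof.
  destruct (colim_el_above F 0) as (k & a & _ & Ha).
  destruct (colim_el_above G k) as (m & b & Hkm & Hb).
  destruct (colim_el_up F k m a Ha Hkm) as [a' Ha'].
  exists m, a', b; split; assumption.
Qed.

Lemma colim_le_refl F : colim_le F F.
Proof.
  destruct (colim_el_above F 0) as (k & a & _ & Ha).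
  exists k, a, a; repeat split; [exact Ha | exact Ha | apply le_refl].
Qed.

Lemma colim_le_trans F G H : colim_le F G -> colim_le G H -> colim_le F H.
Proof.
  intros HFG HGH.
  destruct (colim_el_common F H) as (m & a & c & Ha & Hc).
  destruct (colim_el_above G m) as (m' & b & Hm & Hb).
  destruct (colim_el_up F m m' a Ha Hm) as [a' Ha'].
  destruct (colim_el_up H m m' c Hc Hm) as [c' Hc'].
  rewrite (colim_le_at _ _ _ _ _ Ha' Hb) in HFG. rewrite (colim_le_at _ _ _ _ _ Hb Hc') in HGH.
  apply (colim_le_at _ _ _ _ _ Ha' Hc'). apply le_trans with b; assumption.
Qed.

Lemma colim_el_ext (F G : colim_el) k a :
  proj1_sig F k = Some a -> proj1_sig G k = Some a -> F = G.
Proof.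
  destruct F as [f Hf], G as [g Hg]; simpl; intros Ha Hb.
  assert (f = g) as <- by (eapply thread_ext; eauto).
  f_equal; apply proof_irrelevance.
Qed.

Lemma colim_le_antisym F G : colim_le F G -> colim_le G F -> F = G.
Proof.
  intros HFG HGF. destruct (colim_el_common F G) as (m & a & b & Ha & Hb).
  rewrite (colim_le_at _ _ _ _ _ Ha Hb) in HFG. rewrite (colim_le_at _ _ _ _ _ Hb Ha) in HGF.
  assert (a = b) as <- by (apply le_antisym; assumption).
  eapply colim_el_ext; eassumption.
Qed.

Definition colim : PO := MkPO colim_le colim_le_refl colim_le_antisym colim_le_trans.

(* [a] and its images at all levels >= n; this is a thread unless [a] already
   comes from level n - 1. *)
Fixpoint start n (a : carrier (T n)) (k : nat) : option (carrier (T k)) :=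
  match k as k0 return option (carrier (T k0)) with
  | 0 => match Nat.eq_dec n 0 with
         | left E => Some (eq_rect n (fun m => carrier (T m)) a 0 E)
         | right _ => None
         end
  | S k' => match Nat.eq_dec n (S k') with
         | left E => Some (eq_rect n (fun m => carrier (T m)) a (S k') E)
         | right _ => option_map (e k') (start n a k')
         end
  end.

Lemma start_at n a : start n a n = Some a.
Proof.
  destruct n as [|n]; cbn -[Nat.eq_dec]; destruct (Nat.eq_dec _ _) as [E|E];
    [|congruence| |congruence]; rewrite (UIP_refl_nat _ E); reflexivity.
Qed.

Lemma start_below n a k : k < n -> start n a k = None.
Proof.
  induction k as [|k IH]; intro Hk; cbn -[Nat.eq_dec].
  - destruct (Nat.eq_dec n 0); [lia | reflexivity].
  - destruct (Nat.eq_dec n (S k)); [lia|]. rewrite IH by lia; reflexivity.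
Qed.

Lemma start_succ n a k : n <= k -> start n a (S k) = option_map (e k) (start n a k).
Proof. intro; cbn -[Nat.eq_dec]; destruct (Nat.eq_dec n (S k)); [lia | reflexivity]. Qed.

Lemma start_thread n a :
  (forall k c, S k = n -> start n a (S k) <> Some (e k c)) -> thread (start n a).
Proof.
  intro Hfresh. split; [|split].
  - intros k b Hb. destruct (le_lt_dec n k) as [Hk|Hk].
    + rewrite start_succ, Hb by exact Hk; reflexivity.
    + rewrite start_below in Hb by exact Hk; discriminate.
  - intros k c Hc. destruct (le_lt_dec n k) as [Hk|Hk].
    + rewrite start_succ in Hc by exact Hk.
      destruct (start n a k) eqn:E; simpl in Hc; [|discriminate].
      injection Hc as Hc. apply qemb_inj in Hc as ->; reflexivity.
    + destruct (Nat.eq_dec (S k) n) as [Hn|Hn].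
      * destruct (Hfresh k c Hn Hc).
      * rewrite start_below in Hc by lia; discriminate.
  - exists n, a; apply start_at.
Qed.

(* The canonical thread of [a] starts where [a] first appears in the chain. *)
Fixpoint canon (n : nat) : carrier (T n) -> forall k, option (carrier (T k)) :=
  match n as n0 return carrier (T n0) -> forall k, option (carrier (T k)) with
  | 0 => start 0
  | S n' => fun a =>
      match excluded_middle_informative (exists c, e n' c = a) with
      | left H => canon n' (proj1_sig (constructive_indefinite_description _ H))
      | right _ => start (S n') a
      end
  end.

Lemma canon_spec n a : thread (canon n a) /\ canon n a n = Some a.
Proof.
  revert a. induction n as [|n IH]; intro a.
  - split; [apply start_thread; discriminate | apply start_at].
  - simpl. destruct (excluded_middle_informative _) as [H|H].
    + destruct (constructive_indefinite_description _ H) as [c Hc]; simpl.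
      destruct (IH c) as [Ht Hv]. split; [exact Ht|].
      rewrite (proj1 Ht _ _ Hv), Hc. reflexivity.
    + split; [apply start_thread | apply start_at].
      intros k c Hk; injection Hk as ->. rewrite start_at; intro Hc.
      injection Hc as Hc; apply H; eauto.
Qed.

Definition inj_fun n (a : carrier (T n)) : colim :=
  exist _ (canon n a) (proj1 (canon_spec n a)).

Lemma inj_fun_at n a : proj1_sig (inj_fun n a) n = Some a.
Proof. apply canon_spec. Qed.

Lemma inj_fun_le n a b : le (inj_fun n a) (inj_fun n b) <-> le a b.
Proof. apply colim_le_at; apply inj_fun_at. Qed.

Definition inj n : qemb (T n) colim :=
  MkQemb (T n) colim (inj_fun n) (fun a b h => proj1 (inj_fun_le n a b) h).

Lemma inj_emb n : is_embedding (inj n).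
Proof. intros a b; apply inj_fun_le. Qed.

Lemma colim_el_inj (F : colim) k a : proj1_sig F k = Some a -> F = inj k a.
Proof. intro H. eapply colim_el_ext; [exact H | apply inj_fun_at]. Qed.

Lemma inj_succ n a : inj (S n) (e n a) = inj n a.
Proof. symmetry. apply colim_el_inj, (proj1 (proj2_sig (inj n a))), inj_fun_at. Qed.

Lemma colim_rep (F : colim) : exists k a, F = inj k a.
Proof.
  destruct (proj2 (proj2 (proj2_sig F))) as (k & a & Ha).
  exists k, a; apply colim_el_inj, Ha.
Qed.

Lemma inj_lift k m a : k <= m -> exists b, inj k a = inj m b.
Proof.
  intro Hkm. induction Hkm as [|m _ [b Hb]]; [exists a; reflexivity|].
  exists (e m b). rewrite inj_succ; exact Hb.
Qed.

Lemma colim_level (F : colim) :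
  exists k, (exists a, F = inj k a) /\ forall m a, F = inj m a -> k <= m.
Proof.
  destruct (least_nat (fun k => exists a, F = inj k a)) as (k & Hk & Hmin).
  { apply colim_rep. }
  exists k; split; [exact Hk | intros m a Hm; apply Hmin; eauto].
Qed.

Section DilatorOnColimit.
Context {W : PreDilator} (HW : is_PO_dilator W).

Lemma dmap_inj_succ n (t : carrier (W (T n))) :
  dmap W (inj (S n)) (dmap W (e n) t) = dmap W (inj n) t.
Proof.
  assert (E : qemb_comp (inj (S n)) (e n) = inj n) by (apply qemb_ext; intro; apply inj_succ).
  rewrite <- (dmap_comp HW), E. reflexivity.
Qed.

Lemma dmap_inj_eventually (s : carrier (W colim)) :
  exists N, forall M, N <= M -> exists t, dmap W (inj M) t = s.
Proof.
  destruct (dsupp_finite HW s) as [l Hl].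
  assert (Hlevel : exists N, forall F, In F l -> forall M, N <= M -> exists a, F = inj M a).
  { clear Hl. induction l as [|F l [N HN]]; [exists 0; intros F []|].
    destruct (colim_rep F) as (k & a & ->). exists (N + k).
    intros G [<- | HG] M HM; [apply inj_lift; lia | apply HN; [exact HG | lia]]. }
  destruct Hlevel as [N HN]. exists N. intros M HM.
  apply (dmap_onto_supp HW (inj_emb M)). intros F HF.
  destruct (HN F (Hl F HF) M HM) as [a ->]. exists a; reflexivity.
Qed.
End DilatorOnColimit.
End ChainColimit.

(** * A Kruskal fixed point that is a WPO *)

Section KruskalFixedPoint.
Context {W : PreDilator} (HW : is_PO_dilator W) (HN : is_normal W) (X : PO).

Local Notation stg n := (stage_at HW HN X n).
Local Notation T n := (st_lower (stg n)).

Definition chain_step n : qemb (T n) (T (S n)) := st_qemb (stg n).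

Lemma chain_step_emb n : is_embedding (chain_step n).
Proof. apply st_qemb_emb. Qed.

Definition Zfix : PO := colim (fun k => T k) chain_step chain_step_emb.

Definition J n : qemb (T n) Zfix := inj (fun k => T k) chain_step chain_step_emb n.

Lemma J_succ n a : J (S n) (chain_step n a) = J n a.
Proof. apply inj_succ. Qed.

Lemma J_le n a b : le (J n a) (J n b) <-> le a b.
Proof. apply inj_emb. Qed.

Definition iotaZ (x : carrier X) : carrier Zfix := J 1 (inl x).

Lemma J_inl n x : J (S n) (inl x) = iotaZ x.
Proof.
  induction n as [|n IH]; [reflexivity|]. rewrite <- IH. exact (J_succ (S n) (inl x)).
Qed.

Lemma kappaZ_ex (s : carrier (W Zfix)) :
  exists p : {N : nat & carrier (W (T N))}, dmap W (J (projT1 p)) (projT2 p) = s.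
Proof.
  destruct (dmap_inj_eventually _ _ chain_step_emb HW s) as [N HNs].
  destruct (HNs N (le_n _)) as [t Ht]. exists (existT _ N t); exact Ht.
Qed.

Definition kappaZ (s : carrier (W Zfix)) : carrier Zfix :=
  let p := proj1_sig (constructive_indefinite_description _ (kappaZ_ex s)) in
  J (S (projT1 p)) (inr (projT2 p)).

Lemma J_inr_lift N t d : exists t',
  dmap W (J (d + N)) t' = dmap W (J N) t /\ J (S (d + N)) (inr t') = J (S N) (inr t).
Proof.
  induction d as [|d (t' & H1 & H2)]; [exists t; split; reflexivity|].
  exists (dmap W (chain_step (d + N)) t'). split.
  - simpl plus. rewrite (dmap_inj_succ _ _ chain_step_emb HW). exact H1.
  - rewrite <- H2. exact (J_succ (S (d + N)) (inr t')).
Qed.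

Lemma kappaZ_at N t : kappaZ (dmap W (J N) t) = J (S N) (inr t).
Proof.
  unfold kappaZ.
  destruct (constructive_indefinite_description _ _) as [[N0 t0] H0]; simpl in *.
  destruct (J_inr_lift N t N0) as (t1 & H1 & E1).
  destruct (J_inr_lift N0 t0 N) as (t2 & H2 & E2).
  revert t2 H2 E2; rewrite Nat.add_comm; intros t2 H2 E2.
  rewrite H0, <- H1 in H2. apply qemb_inj in H2 as ->.
  exact (eq_trans (eq_sym E2) E1).
Qed.

Lemma dmap_J_rep (s s' : carrier (W Zfix)) :
  exists N t t', s = dmap W (J N) t /\ s' = dmap W (J N) t'.
Proof.
  destruct (dmap_inj_eventually _ _ chain_step_emb HW s) as [N1 H1].
  destruct (dmap_inj_eventually _ _ chain_step_emb HW s') as [N2 H2].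
  destruct (H1 (N1 + N2)) as [t <-]; [lia|]. destruct (H2 (N1 + N2)) as [t' <-]; [lia|].
  exists (N1 + N2), t, t'; split; reflexivity.
Qed.

Lemma le_fin_dmap_J N a t :
  le_fin (fun z => z = J (S N) a) (dsupp W (dmap W (J N) t)) <->
  exists z, dsupp W t z /\ st_le (stg N) a (st_emb (stg N) z).
Proof.
  split.
  - intro H. destruct (H _ eq_refl) as (y & Hy & Hle).
    apply (dsupp_dmap HW) in Hy as (z & Hz & <-).
    rewrite <- (J_succ N z), J_le in Hle. exists z; split; assumption.
  - intros (z & Hz & Hle) _ ->. exists (J N z). split.
    + apply (dsupp_dmap HW); exists z; split; [exact Hz | reflexivity].
    + rewrite <- (J_succ N z); apply J_le, Hle.
Qed.

Lemma iotaZ_le x y : le (iotaZ x) (iotaZ y) <-> le x y.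
Proof. apply (J_le 1 (inl x) (inl y)). Qed.

Lemma iotaZ_neq_kappaZ x s : iotaZ x <> kappaZ s.
Proof.
  destruct (dmap_J_rep s s) as (N & t & _ & -> & _).
  rewrite kappaZ_at, <- (J_inl N x). intro E; apply qemb_inj in E; discriminate.
Qed.

Lemma iotaZ_le_kappaZ x s :
  le (iotaZ x) (kappaZ s) <-> le_fin (fun z => z = iotaZ x) (dsupp W s).
Proof.
  destruct (dmap_J_rep s s) as (N & t & _ & -> & _).
  rewrite kappaZ_at, <- (J_inl N x), J_le, le_fin_dmap_J. apply st_inl_inr.
Qed.

Lemma kappaZ_not_le_iotaZ s y : ~ le (kappaZ s) (iotaZ y).
Proof.
  destruct (dmap_J_rep s s) as (N & t & _ & -> & _).
  rewrite kappaZ_at, <- (J_inl N y), J_le. apply st_inr_inl.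
Qed.

Lemma kappaZ_le s s' :
  le (kappaZ s) (kappaZ s') <-> le s s' \/ le_fin (fun z => z = kappaZ s) (dsupp W s').
Proof.
  destruct (dmap_J_rep s s') as (N & t & t' & -> & ->).
  rewrite !kappaZ_at, J_le, le_fin_dmap_J, (dmap_emb HW (inj_emb _ _ chain_step_emb N) t t').
  apply st_inr_inr.
Qed.

Theorem Zfix_Kruskal : is_Kruskal_fixed_point W X Zfix iotaZ kappaZ.
Proof.
  refine (conj _ (conj _ (conj _ (conj _ _)))).
  - exact iotaZ_neq_kappaZ.
  - intros x y; apply iotaZ_le.
  - exact iotaZ_le_kappaZ.
  - exact kappaZ_not_le_iotaZ.
  - exact kappaZ_le.
Qed.

Lemma supp_le_kappaZ s u : dsupp W s u -> le u (kappaZ s).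
Proof.
  destruct (dmap_J_rep s s) as (N & t & _ & -> & _). intro Hu.
  apply (dsupp_dmap HW) in Hu as (z & Hz & <-).
  rewrite kappaZ_at, <- (J_succ N z), J_le. apply st_supp_below, Hz.
Qed.

Section Levels.
Variable level : carrier Zfix -> nat.
Hypothesis level_spec : forall F,
  (exists a, F = J (level F) a) /\ forall m a, F = J m a -> level F <= m.

Lemma iotaZ_or_kappaZ F : (exists x, F = iotaZ x) \/
  (exists s, F = kappaZ s /\ forall u, dsupp W s u -> level u < level F).
Proof.
  destruct (level_spec F) as [[a Ha] _]. revert a Ha. destruct (level F) as [|n].
  - intros [].  (* T_0 is empty *)
  - intros [x|t] ->; [left; exists x; apply J_inl|].
    right; exists (dmap W (J n) t). split; [symmetry; apply kappaZ_at|].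
    intros u Hu. apply (dsupp_dmap HW) in Hu as (z & _ & <-).
    specialize (proj2 (level_spec (J n z)) n z eq_refl). lia.
Qed.
End Levels.

Theorem Zfix_WPO :
  (forall Y, is_WPO Y -> is_WPO (W Y)) -> is_WPO X -> is_WPO Zfix.
Proof.
  intros W_WPO HX.
  destruct (choice _ (colim_level _ _ chain_step_emb)) as [level Hlevel].
  apply (generated_WPO HW W_WPO X Zfix HX iotaZ kappaZ level).
  - intros x y; apply iotaZ_le.
  - intros s t Hst; apply kappaZ_le; left; exact Hst.
  - exact supp_le_kappaZ.
  - exact (iotaZ_or_kappaZ level Hlevel).
Qed.
End KruskalFixedPoint.

Theorem corollary4p5 (W TW : PreDilator)
  (iota : forall X : PO, carrier X -> carrier (TW X))
  (kappa : forall X : PO, carrier (W (TW X)) -> carrier (TW X)) :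
  is_WPO_dilator W -> is_normal W ->
  is_Kruskal_derivative W TW iota kappa ->
  is_WPO_dilator TW /\ is_normal TW.
Proof.
  intros [HW W_WPO] HN (HTW & HTW_normal & Hinitial & _).
  split; [split; [exact HTW|] | exact HTW_normal].
  intros X HX.
  destruct (proj2 (Hinitial X) _ _ _ (Zfix_Kruskal HW HN X)) as [f _].
  exact (WPO_qemb f (Zfix_WPO HW HN X W_WPO HX)).
Qed.
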